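(* Let $(X,A)$ be a relative fat CW complex with fat skeleta $X^{(n)}$. For each $n\ge0$, the canonical map $\hat i_n:X^{(n-1)}\to X^{(n)}$ is an induction.
   Context: An induction is an injective smooth map that is a diffeomorphism onto its image with the subset diffeology. Let $\ell(t)=0$ for $t\le0$, $e^{-1/t}$ for $t>0$; $\alpha_0=\int_0^1\ell(3x)\ell(3-3x)dx$; $\lambda(t)=\frac1{\alpha_0}\int_0^t\ell(3x)\ell(3-3x)dx$; $\phi(t)=\int_0^{1/2+t}\lambda(x)dx$. For integers $n,m\ge0$: $\mathbb{D}^{n,m}=\{(u,v)\in\mathbb{R}^n\times\mathbb{R}^m:\|u\|\ge1-\phi(2-\|u\|-\|v\|)\}$, $\mathbb{S}^{n-1,m}=\{(u,v):\|u\|\ge1\}$ (empty for $n=0$), with subset diffeologies. A relative fat CW complex $(X,A)$ consists of a diffeological space $X$, subspaces $A=X^{(-1)}\subset X^{(0)}\subset\cdots$, index sets $J_n$, maps $m_n:J_n\to\mathbb{N}_0$ and smooth maps $h_n:\coprod_{j\in J_n}\mathbb{S}^{n-1,m_n(j)}\to X^{(n-1)}$ such that $X^{(n)}$ is the pushout in the category of diffeological spaces of the inclusion $i_n:\coprod_j\mathbb{S}^{n-1,m_n(j)}\hookrightarrow\coprod_j\mathbb{D}^{n,m_n(j)}$ and $h_n$, with induced maps $\hat i_n:X^{(n-1)}\to X^{(n)}$ and $\hat h_n:\coprod_j\mathbb{D}^{n,m_n(j)}\to X^{(n)}$, and $X$ is the diffeological colimit of the $X^{(n)}$. *)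

From HB Require Import structures.
From mathcomp Require Import all_boot all_order all_algebra.
From mathcomp Require Import all_classical all_reals all_analysis.
Set Implicit Arguments. Unset Strict Implicit. Unset Printing Implicit Defensive.
Import Order.TTheory GRing.Theory Num.Theory.
Import numFieldNormedType.Exports.
Local Open Scope classical_set_scope.
Local Open Scope ring_scope.

Section Diffeology.
Variable R : realType.

Definition basis_vec (n : nat) (i : 'I_n) : 'rV[R]_n := delta_mx 0 i.

Definition partials_closed (n k : nat) (U : set 'rV[R]_n)
    (S : set ('rV[R]_n -> 'rV[R]_k)) : Prop :=
  forall g, S g ->
    (forall x, U x -> {for x, continuous g}) /\
    (forall i : 'I_n,
        (forall x, U x -> derivable g x (basis_vec i)) /\
        S (fun y => 'D_(basis_vec i) g y)).

(* F is C^infinity on U: all iterated partial derivatives of F exist and are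
   continuous on U. *)
Definition smooth_on (n k : nat) (U : set 'rV[R]_n) (F : 'rV[R]_n -> 'rV[R]_k) :=
  exists S, partials_closed U S /\ S F.

(* A space with a family of plots; a plot of dimension n is a pair (U, p) with
   U an open subset of R^n and p : U -> X (represented by a total map whose
   values outside U are irrelevant). *)
Record dspace := DSpace {
  dcar :> Type;
  dplot : forall n : nat, set 'rV[R]_n -> ('rV[R]_n -> dcar) -> Prop }.

Definition is_diffeology (X : dspace) : Prop :=
  (forall n U p, @dplot X n U p -> open U) /\
  (forall n U (p q : 'rV[R]_n -> X), dplot U p ->
      (forall x, U x -> p x = q x) -> dplot U q) /\
  (forall n (U : set 'rV[R]_n) (c : X), open U -> dplot U (fun _ => c)) /\
  (forall n (U : set 'rV[R]_n) (p : 'rV[R]_n -> X), open U ->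
      (forall x, U x -> exists V, [/\ open V, V x, V `<=` U & dplot V p]) ->
      dplot U p) /\
  (forall n k (U : set 'rV[R]_n) (p : 'rV[R]_n -> X) (V : set 'rV[R]_k)
          (F : 'rV[R]_k -> 'rV[R]_n),
      dplot U p -> open V -> smooth_on V F -> (forall y, V y -> U (F y)) ->
      dplot V (p \o F)).

Definition dsmooth (X Y : dspace) (f : X -> Y) : Prop :=
  forall n U (p : 'rV[R]_n -> X), dplot U p -> dplot U (f \o p).

Definition ddiffeo (X Y : dspace) (f : X -> Y) : Prop :=
  dsmooth f /\ exists g : Y -> X, [/\ dsmooth g, cancel f g & cancel g f].

Definition euclid (k : nat) : dspace :=
  @DSpace 'rV[R]_k (fun n U p => open U /\ smooth_on U p).

Definition subspace (X : dspace) (A : set X) : dspace :=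
  @DSpace {x : X | A x} (fun n U p => dplot U (sval \o p)).

Definition coprod (J : Type) (T : J -> dspace) : dspace :=
  @DSpace {j : J & T j} (fun n U p =>
    open U /\
    forall x, U x -> exists V j (q : 'rV[R]_n -> T j),
      [/\ open V, V x, V `<=` U, dplot V q &
          forall y, V y -> p y = existT _ j (q y)]).

Definition dimage (X Y : dspace) (f : X -> Y) : set Y := fun y => exists x, f x = y.
Definition corestr (X Y : dspace) (f : X -> Y) : X -> subspace (dimage f) :=
  fun x => exist _ (f x) (ex_intro _ x erefl).
Definition induction_map (X Y : dspace) (f : X -> Y) : Prop :=
  [/\ injective f, dsmooth f & ddiffeo (corestr f)].

Definition is_pushout (A B C P : dspace) (f : A -> B) (g : A -> C)
    (jB : B -> P) (jC : C -> P) : Prop :=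
  [/\ dsmooth jB, dsmooth jC, jB \o f = jC \o g &
      forall Q : dspace, is_diffeology Q ->
      forall (kB : B -> Q) (kC : C -> Q), dsmooth kB -> dsmooth kC ->
        kB \o f = kC \o g ->
        exists u : P -> Q, (dsmooth u /\ u \o jB = kB /\ u \o jC = kC) /\
          forall u' : P -> Q, dsmooth u' -> u' \o jB = kB -> u' \o jC = kC ->
            u' = u].

Definition is_seq_colimit (Xs : nat -> dspace) (s : forall k, Xs k -> Xs k.+1)
    (X : dspace) (c : forall k, Xs k -> X) : Prop :=
  (forall k, dsmooth (c k) /\ c k.+1 \o s k = c k) /\
  forall Q : dspace, is_diffeology Q ->
  forall (d : forall k, Xs k -> Q),
    (forall k, dsmooth (d k) /\ d k.+1 \o s k = d k) ->
    exists u : X -> Q, (dsmooth u /\ forall k, u \o c k = d k) /\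
      forall u' : X -> Q, dsmooth u' -> (forall k, u' \o c k = d k) -> u' = u.

Local Unset Implicit Arguments.
Definition ell (t : R) : R := if t <= 0 then 0 else expR (- t^-1).

Definition integ0 (f : R -> R) (t : R) : R :=
  if 0 <= t then Rintegral (@lebesgue_measure R) `[0, t] f
  else - Rintegral (@lebesgue_measure R) `[t, 0] f.

Definition bump (x : R) : R := ell (3 * x) * ell (3 - 3 * x).
Definition alpha0 : R := integ0 bump 1.
Definition lam (t : R) : R := alpha0^-1 * integ0 bump t.
Definition phi (t : R) : R := integ0 lam (2^-1 + t).

Definition enorm {k : nat} (u : 'rV[R]_k) : R := Num.sqrt (\sum_i u 0 i ^+ 2).

(* R^n x R^m is represented as R^(n+m); u = lsubmx, v = rsubmx *)
Definition fatD_set (n m : nat) : set 'rV[R]_(n + m) :=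
  fun x => enorm (lsubmx x) >= 1 - phi (2 - enorm (lsubmx x) - enorm (rsubmx x)).
Definition fatD (n m : nat) : dspace := subspace (fatD_set n m : set (euclid (n + m))).

(* S^{n-1,m} = {(u,v) : |u| >= 1}, as a subset of D^{n,m} (which contains it) *)
Definition fatS_set (n m : nat) : set (fatD n m) :=
  fun x => enorm (lsubmx (sval x)) >= 1.
Definition fatS (n m : nat) : dspace := subspace (fatS_set n m).

Definition cell_incl (n : nat) (J : Type) (mj : J -> nat) :
    coprod (fun j => fatS n (mj j)) -> coprod (fun j => fatD n (mj j)) :=
  fun z => existT _ (projT1 z) (sval (projT2 z)).

End Diffeology.

(* Since the inclusion [cell_incl] of the fat spheres into the fat disks is
   injective, testing the pushout against the indiscrete space of subsets of
   [X^(n-1)] shows that [ih] is injective and that a disk point is glued to [ih x]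
   only if it lies on a sphere over [x].  For the induction property, equip [X^(n)]
   with the plots whose smooth reparametrizations into the image of [ih] lift to
   [X^(n-1)].  Both pushout maps are smooth into this diffeology (a reparametrized
   disk plot landing in the image lands in the spheres, lifts there, and [h]
   carries the lift to [X^(n-1)]), so by uniqueness in the universal property it is
   the pushout diffeology itself.  Behind this lies the fact that smooth maps
   between open subsets of Euclidean spaces compose, obtained from the chain rule
   after showing that continuous partial derivatives give differentiability. *)

From Pilot Require Import Defs.
From HB Require Import structures.
From mathcomp Require Import all_boot all_order all_algebra.
From mathcomp Require Import all_classical all_reals all_analysis.
From Stdlib Require Import Eqdep.
Set Implicit Arguments. Unset Strict Implicit. Unset Printing Implicit Defensive.
Import Order.TTheory GRing.Theory Num.Theory.
Import numFieldNormedType.Exports.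
Local Open Scope classical_set_scope.
Local Open Scope ring_scope.

Section Smooth.
Variable R : realType.
Local Notation e := (basis_vec R).

Section SmoothDef.
Variables (n : nat) (W : normedModType R).

Definition partials_stable (U : set 'rV[R]_n) (S : set ('rV[R]_n -> W)) : Prop :=
  forall g, S g ->
    (forall x, U x -> {for x, continuous g}) /\
    (forall i : 'I_n,
        (forall x, U x -> derivable g x (e i)) /\ S (fun y => 'D_(e i) g y)).

Definition smooth (U : set 'rV[R]_n) (f : 'rV[R]_n -> W) :=
  exists S, partials_stable U S /\ S f.

Variables (U : set 'rV[R]_n) (f : 'rV[R]_n -> W).

Lemma smooth_sub (V : set 'rV[R]_n) : V `<=` U -> smooth U f -> smooth V f.
Proof.
move=> VU [S [pS Sf]]; exists S; split => // g /pS [cg dg]; split.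
  by move=> x /VU; exact: cg.
by move=> i; have [dg1 dg2] := dg i; split => // x /VU; exact: dg1.
Qed.

Lemma smooth_cont x : smooth U f -> U x -> {for x, continuous f}.
Proof. by move=> [S [pS /pS [cf _]]]; exact: cf. Qed.

Lemma smooth_derivable i x : smooth U f -> U x -> derivable f x (e i).
Proof. by move=> [S [pS /pS [_ /(_ i) [df _]]]]; exact: df. Qed.

Lemma smooth_partial i : smooth U f -> smooth U ('D_(e i) f).
Proof. by move=> [S [pS Sf]]; exists S; have [_ /(_ i) [_ ?]] := pS _ Sf. Qed.

#[global] Arguments smooth_derivable i {x}.

End SmoothDef.

Lemma smooth_onE n k (U : set 'rV[R]_n) (f : 'rV[R]_n -> 'rV[R]_k) :
  smooth_on U f <-> smooth U f.
Proof. by split; move=> [S [pS Sf]]; exists S. Qed.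

Lemma open_nbhs_of n (U : set 'rV[R]_n) x : open U -> U x -> nbhs x U.
Proof. by move=> oU Ux; apply: open_nbhs_nbhs; split. Qed.

Lemma smooth_gen n (W : normedModType R) (U : set 'rV[R]_n) (S : set ('rV[R]_n -> W)) :
  open U ->
  (forall g, S g -> (forall x, U x -> {for x, continuous g}) /\
     forall i, (forall x, U x -> derivable g x (e i)) /\
       exists2 g', S g' & forall y, U y -> 'D_(e i) g y = g' y) ->
  forall f g, S f -> (forall x, U x -> f x = g x) -> smooth U g.
Proof.
move=> oU hS f0 g0 Sf0 fg0.
exists (fun h => exists2 g, S g & forall y, U y -> g y = h y); split; last by exists f0.
move=> h [g Sg gh]; have [cg dg] := hS _ Sg.
have near_gh x : U x -> {near x, g =1 h}.
  by move=> Ux; apply: filterS (open_nbhs_of oU Ux) => y /gh.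
split.
  move=> x Ux; have := cg _ Ux; rewrite /prop_for /continuous_at (gh _ Ux) => cgx.
  exact: cvg_trans (near_eq_cvg (near_gh _ Ux)) cgx.
move=> i; have [dg1 [g' Sg' eg']] := dg i; split.
  by move=> x Ux; exact: near_eq_derivable (near_gh _ Ux) (dg1 _ Ux).
exists g' => // x Ux; rewrite -eg' //.
by apply: near_eq_derive; apply: filterS (open_nbhs_of oU Ux) => y /gh.
Qed.

Lemma smooth_ext n (W : normedModType R) (U : set 'rV[R]_n) (f g : 'rV[R]_n -> W) :
  open U -> (forall x, U x -> f x = g x) -> smooth U f -> smooth U g.
Proof.
move=> oU fg sf; apply: (smooth_gen oU _ sf fg) => h sh; split.
  by move=> x; exact: smooth_cont.
move=> i; split; first by move=> x; exact: smooth_derivable.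
by exists ('D_(e i) h) => //; exact: smooth_partial.
Qed.

Lemma smooth_cst n (W : normedModType R) (U : set 'rV[R]_n) (c : W) : smooth U (cst c).
Proof.
exists (fun g => exists c, g = cst c); split; last by exists c.
move=> g [c' ->]; split; first by move=> x _; exact: cst_continuous.
move=> i; split; first by move=> x _; exact: derivable_cst.
by exists 0; apply: funext => y; rewrite derive_cst.
Qed.

Lemma smooth_id n (U : set 'rV[R]_n) : smooth U id.
Proof.
exists (fun g => g = id \/ exists c, g = cst c); split; last by left.
move=> g [->|[c ->]]; split.
- by move=> x _; exact: cvg_id.
- move=> i; split; first by move=> x _; exact: derivable_id.
  by right; exists (e i); apply: funext => y; rewrite derive_id.
- by move=> x _; exact: cst_continuous.
- move=> i; split; first by move=> x _; exact: derivable_cst.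
  by right; exists 0; apply: funext => y; rewrite derive_cst.
Qed.

Lemma smooth_coord n k (U : set 'rV[R]_n) (F : 'rV[R]_n -> 'rV[R]_k) l :
  open U -> smooth U F -> smooth U (fun y => F y 0 l).
Proof.
move=> oU sF.
pose S (g : 'rV[R]_n -> R) := exists2 G : 'rV[R]_n -> 'rV[R]_k, smooth U G & g = fun y => G y 0 l.
have SF : S (fun y => F y 0 l) by exists F.
apply: (smooth_gen (S := S) oU _ SF (fun _ _ => erefl)) => // g [G sG ->]; split.
  move=> x Ux; apply: (@continuous_comp _ _ _ G (fun M : 'rV[R]_k => M 0 l)).
    exact: smooth_cont sG Ux.
  exact: coord_continuous.
move=> i; split.
  by move=> x Ux; exact: ((derivable_mxP _ _ _).1 (smooth_derivable i sG Ux) 0 l).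
exists (fun y => 'D_(e i) G y 0 l).
  by rewrite /S; exists ('D_(e i) G) => //; exact: smooth_partial.
by move=> y Uy; rewrite derive_mx ?mxE //; exact (smooth_derivable i sG Uy).
Qed.

Lemma fun_row_sum_delta (T : Type) k (G : T -> 'rV[R]_k) :
  G = \sum_(l < k) (fun y => G y 0 l *: (delta_mx 0 l : 'rV[R]_k)).
Proof. by apply: funext => y; rewrite fct_sumE -row_sum_delta. Qed.

Lemma smooth_row n k (U : set 'rV[R]_n) (G : 'rV[R]_n -> 'rV[R]_k) :
  open U -> (forall l, smooth U (fun y => G y 0 l)) -> smooth U G.
Proof.
move=> oU sG; pose S (g : 'rV[R]_n -> 'rV[R]_k) := forall l, smooth U (fun y => g y 0 l).
apply: (smooth_gen (S := S) oU _ sG (fun _ _ => erefl)) => // g Sg.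
have der i x : U x -> derivable g x (e i).
  move=> Ux; apply/derivable_mxP => i' l; rewrite (ord1 i').
  exact: smooth_derivable (Sg l) Ux.
split.
  move=> x Ux; rewrite (fun_row_sum_delta g).
  apply: (big_ind (fun h : 'rV[R]_n -> 'rV[R]_k => {for x, continuous h})).
  - exact: cst_continuous.
  - by move=> f1 f2 c1 c2; apply: continuousD.
  - move=> l _; apply: continuousZ; last exact: cst_continuous.
    exact: smooth_cont (Sg l) Ux.
move=> i; split; first exact: der.
exists ('D_(e i) g) => //; rewrite /S => l.
apply: smooth_ext (smooth_partial i (Sg l)) => // y Uy.
by rewrite derive_mx ?mxE //; exact: der.
Qed.

End Smooth.

Section Differentiability.
Variable R : realType.
Local Notation e := (basis_vec R).

Lemma is_derive_line (V W : normedModType R) (f : V -> W) (y v : V) (t : R) :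
  derivable f (y + t *: v) v ->
  is_derive t 1 (fun s => f (y + s *: v)) ('D_v f (y + t *: v)).
Proof.
have E : (fun h : R => h^-1 *: ((fun s => f (y + s *: v)) (h *: 1 + t) - f (y + t *: v)))
  = (fun h => h^-1 *: (f (h *: v + (y + t *: v)) - f (y + t *: v))).
  apply: funext => h /=; congr (_ *: (f _ - _)).
  by rewrite -[h *: 1]/(h * 1) mulr1 scalerDl addrCA.
by move=> d; apply: DeriveDef; [rewrite /derivable /= E | rewrite /derive /= E].
Qed.

Lemma MVT_abs (f df : R -> R) (b : R) :
  (forall t : R, `|t| <= `|b| -> is_derive t (1 : R) f (df t)) ->
  exists2 c, `|c| <= `|b| & f b - f 0 = df c * b.
Proof.
move=> fdf.
have cf t : `|t| <= `|b| -> {for t, continuous f}.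
  move=> /fdf ft; apply/differentiable_continuous/derivable1_diffP.
  exact: (@ex_derive _ _ _ _ _ _ _ ft).
have [b0|b0] := leP 0 b.
  have [c] : exists2 c, c \in `[0, b]%R & f b - f 0 = df c * (b - 0).
    apply: MVT_segment => //.
      move=> t; rewrite in_itv /= => /andP [t0 tb]; apply: fdf.
      by rewrite !ger0_norm ?(ltW t0) // ltW.
    apply: continuous_in_subspaceT => t; rewrite inE /= in_itv /= => /andP [t0 tb].
    by apply: cf; rewrite !ger0_norm.
  rewrite in_itv /= subr0 => /andP [c0 cb] E.
  by exists c; rewrite // !ger0_norm.
have [c] : exists2 c, c \in `[b, 0]%R & f 0 - f b = df c * (0 - b).
  apply: MVT_segment; first exact: ltW.
    move=> t; rewrite in_itv /= => /andP [bt t0]; apply: fdf.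
    by rewrite !ltr0_norm // lerN2 ltW.
  apply: continuous_in_subspaceT => t; rewrite inE /= in_itv /= => /andP [bt t0].
  by apply: cf; rewrite ler0_norm // ltr0_norm // lerN2.
rewrite in_itv /= sub0r mulrN => /andP [bc c0] E.
exists c; first by rewrite ler0_norm // ltr0_norm // lerN2.
by rewrite -opprB E opprK.
Qed.

Lemma increment_along (V : normedModType R) (f : V -> R) (y v : V) (t a eps : R) :
  (forall s, `|s| <= `|t| ->
     derivable f (y + s *: v) v /\ `|a - 'D_v f (y + s *: v)| <= eps) ->
  `|f (y + t *: v) - f y - t * a| <= eps * `|t|.
Proof.
move=> hf.
have [|c ct E] := @MVT_abs (fun s => f (y + s *: v)) (fun s => 'D_v f (y + s *: v)) t.
  by move=> s /hf [df _]; exact: is_derive_line.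
move: E; rewrite /= scale0r addr0 => ->.
by rewrite [t * a]mulrC -mulrBl normrM distrC ler_wpM2r // (hf c ct).2.
Qed.

Lemma norm_row_coord n (h : 'rV[R]_n) j : `|h 0 j| <= `|h|.
Proof.
rewrite [leRHS]/Num.Def.normr /= mx_normrE.
exact: (le_bigmax _ _ (0, j)).
Qed.

Lemma norm_row_le n (g : 'rV[R]_n) (c : R) :
  0 <= c -> (forall j, `|g 0 j| <= c) -> `|g| <= c.
Proof.
move=> c0 gc; rewrite [leLHS]/Num.Def.normr /= mx_normrE.
by apply: bigmax_le => // -[i j] _ /=; rewrite (ord1 i).
Qed.

(* The path from [x] to [x + h] changing one coordinate at a time passes through
   the points [x + row_prefix h j]. *)
Definition row_prefix n (h : 'rV[R]_n) (j : nat) : 'rV[R]_n :=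
  \row_l (if (l < j)%N then h 0 l else 0).

Lemma row_prefix0 n (h : 'rV[R]_n) : row_prefix h 0 = 0.
Proof. by apply/rowP => l; rewrite !mxE. Qed.

Lemma row_prefix_full n (h : 'rV[R]_n) : row_prefix h n = h.
Proof. by apply/rowP => l; rewrite !mxE ltn_ord. Qed.

Lemma row_prefix_lineE n (h : 'rV[R]_n) (j : 'I_n) t l :
  (row_prefix h j + t *: e j) 0 l = if (l < j)%N then h 0 l else if l == j then t else 0.
Proof.
rewrite !mxE eqxx /=; case: ltnP => lj.
  by rewrite -val_eqE /= ltn_eqF // mulr0 addr0.
by rewrite add0r; case: eqP => _; rewrite ?mulr1 ?mulr0.
Qed.

Lemma row_prefixS n (h : 'rV[R]_n) (j : 'I_n) :
  row_prefix h j.+1 = row_prefix h j + h 0 j *: e j.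
Proof.
apply/rowP => l; rewrite row_prefix_lineE mxE ltnS leq_eqVlt -val_eqE /=.
by case: eqP => [/val_inj -> | _] //; rewrite ltnn.
Qed.

Lemma norm_row_prefix_line n (h : 'rV[R]_n) (j : 'I_n) t :
  `|t| <= `|h| -> `|row_prefix h j + t *: e j| <= `|h|.
Proof.
move=> th; apply: norm_row_le => // l; rewrite row_prefix_lineE.
by case: ifP => _; [exact: norm_row_coord | case: ifP => _; rewrite ?normr0].
Qed.

Definition row_dot n (a : 'I_n -> R) (w : 'rV[R]_n) : R := \sum_j w 0 j * a j.

Lemma row_dot_linear n (a : 'I_n -> R) : linear (row_dot a).
Proof.
move=> k u v; rewrite /row_dot scaler_sumr -big_split /=; apply: eq_bigr => j _.
by rewrite !mxE mulrDl -mulrA.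
Qed.

Lemma row_dot_continuous n (a : 'I_n -> R) : continuous (row_dot a).
Proof.
move=> w; have -> : row_dot a = \sum_j (fun w : 'rV[R]_n => w 0 j * a j).
  by apply: funext => v; rewrite fct_sumE.
apply: (big_ind (fun g : 'rV[R]_n -> R => {for w, continuous g})).
- exact: cst_continuous.
- by move=> f g cf cg; apply: continuousD.
- move=> j _; apply: continuousM; last exact: cst_continuous.
  exact: coord_continuous.
Qed.

Lemma row_prefix_telescope n (f : 'rV[R]_n -> R) x h (a : 'I_n -> R) :
  f (x + h) - f x - row_dot a h =
  \sum_(j < n) (f (x + row_prefix h j.+1) - f (x + row_prefix h j) - h 0 j * a j).
Proof.
rewrite sumrB -(big_mkord xpredT (fun j => f (x + row_prefix h j.+1) - f (x + row_prefix h j))).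
by rewrite telescope_sumr // row_prefix_full row_prefix0 addr0.
Qed.

(* Continuity of the partials is only needed at [x]: along the coordinate path
   each increment is controlled by the mean value theorem. *)
Lemma differentiable_partials n (U : set 'rV[R]_n) (f : 'rV[R]_n -> R) x :
  open U -> U x -> (forall i y, U y -> derivable f y (e i)) ->
  (forall i, {for x, continuous ('D_(e i) f)}) -> differentiable f x.
Proof.
move=> oU Ux df cD.
pose a j := 'D_(e j) f x.
pose L : {linear 'rV[R]_n -> R} :=
  HB.pack (row_dot a) (GRing.isLinear.Build _ _ _ _ _ (row_dot_linear a)).
have cL : continuous L by exact: row_dot_continuous.
suff key : f \o shift x = cst (f x) + (L : 'rV[R]_n -> R) +o_ (0 : 'rV[R]_n) id.
  by apply/diff_locallyP; rewrite (diff_unique cL key).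
apply/eqaddoP => eps eps0.
pose e' := eps / n.+1%:R.
have e'0 : 0 < e' by rewrite divr_gt0.
have : \forall y \near x, U y /\ forall i, `|a i - 'D_(e i) f y| <= e'.
  apply: filterI; first exact: open_nbhs_of.
  apply: (@filter_forall _ _ (fun i y => `|a i - 'D_(e i) f y| <= e') (nbhs x) _) => i.
  exact: (cvgrPdist_le _ _).1 (cD i) _ e'0.
move=> /(nbhs_ballP _ _).1 [d d0 dball].
near=> h.
have hd : `|h| < d by near: h; exact: (@nbhs0_lt R 'rV[R]_n d d0).
have step (j : 'I_n) :
    `|f (x + row_prefix h j.+1) - f (x + row_prefix h j) - h 0 j * a j| <= e' * `|h|.
  rewrite row_prefixS addrA.
  apply: (@le_trans _ _ (e' * `|h 0 j|)).
    apply: increment_along => s sh.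
    have /dball [Uy Dy] : ball x d (x + row_prefix h j + s *: e j).
      rewrite -ball_normE /ball_ /= -addrA opprD addrA subrr add0r normrN.
      exact: le_lt_trans (norm_row_prefix_line _ (le_trans sh (norm_row_coord h j))) hd.
    by split; [exact: df | exact: Dy].
  by apply: ler_wpM2l; [exact: ltW | exact: norm_row_coord].
have -> : (f \o shift x - (cst (f x) + L)) h = f (x + h) - f x - row_dot a h.
  by rewrite [x + h]addrC -addrA -opprD.
rewrite row_prefix_telescope.
apply: le_trans (ler_norm_sum _ _ _) _.
apply: le_trans (ler_sum _ (fun j _ => step j)) _.
rewrite sumr_const card_ord -mulr_natl mulrA ler_wpM2r //.
by rewrite /e' mulrA ler_pdivrMr ?ltr0Sn // mulrC ler_pM2l // ler_nat leqnSn.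
Unshelve. all: by end_near.
Qed.

Lemma diff_rowE n (W : normedModType R) (f : 'rV[R]_n -> W) x w :
  differentiable f x -> 'd f x w = \sum_j w 0 j *: 'D_(e j) f x.
Proof.
move=> df; rewrite {1}(row_sum_delta w) linear_sum; apply: eq_bigr => j _.
by rewrite linearZ /= deriveE.
Qed.

End Differentiability.

Section Composition.
Variable R : realType.
Local Notation e := (basis_vec R).

Lemma smooth_differentiableR n (U : set 'rV[R]_n) (f : 'rV[R]_n -> R) x :
  open U -> smooth U f -> U x -> differentiable f x.
Proof.
move=> oU sf Ux; apply: (differentiable_partials oU Ux) => i.
  by move=> y; exact: smooth_derivable.
exact: smooth_cont (smooth_partial i sf) Ux.
Qed.

Lemma smooth_differentiable n k (U : set 'rV[R]_n) (F : 'rV[R]_n -> 'rV[R]_k) x :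
  open U -> smooth U F -> U x -> differentiable F x.
Proof.
move=> oU sF Ux; rewrite (fun_row_sum_delta F).
apply: differentiable_sum => l; apply: differentiableZl.
exact: smooth_differentiableR oU (smooth_coord l oU sF) Ux.
Qed.

Lemma derive_comp_row n k (A : 'rV[R]_n -> R) (F : 'rV[R]_k -> 'rV[R]_n) y v :
  differentiable A (F y) -> differentiable F y ->
  derivable (A \o F) y v /\
  'D_v (A \o F) y = \sum_j 'D_v F y 0 j * 'D_(e j) A (F y).
Proof.
move=> dA dF; have dAF : differentiable (A \o F) y by exact: differentiable_comp.
split; first exact: diff_derivable.
by rewrite deriveE // diff_comp // /= diff_rowE // (deriveE _ dF).
Qed.

Variables (n k : nat) (U : set 'rV[R]_n) (V : set 'rV[R]_k) (F : 'rV[R]_k -> 'rV[R]_n).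
Hypotheses (oU : open U) (oV : open V) (sF : smooth V F) (FVU : forall y, V y -> U (F y)).

(* The algebra generated by smooth functions on V and pullbacks of smooth functions
   on U is closed under partial derivatives, by the chain and product rules. *)
Inductive pullback_alg : ('rV[R]_k -> R) -> Prop :=
| pullback_alg_smooth g : smooth V g -> pullback_alg g
| pullback_alg_comp A : smooth U A -> pullback_alg (A \o F)
| pullback_alg_add g1 g2 : pullback_alg g1 -> pullback_alg g2 -> pullback_alg (g1 + g2)
| pullback_alg_mul g1 g2 : pullback_alg g1 -> pullback_alg g2 -> pullback_alg (g1 * g2).

Lemma pullback_alg_sum (I : Type) (r : seq I) (G : I -> 'rV[R]_k -> R) :
  (forall i, pullback_alg (G i)) -> pullback_alg (\sum_(i <- r) G i).
Proof.
move=> pG; apply: big_ind => //; last exact: pullback_alg_add.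
exact: pullback_alg_smooth (smooth_cst _ _).
Qed.

Lemma pullback_alg_stable g : pullback_alg g ->
  (forall y, V y -> {for y, continuous g}) /\
  forall i, (forall y, V y -> derivable g y (e i)) /\
    exists2 g', pullback_alg g' & forall y, V y -> 'D_(e i) g y = g' y.
Proof.
elim=> {g} [g sg | A sA | g1 g2 _ [c1 d1] _ [c2 d2] | g1 g2 a1 [c1 d1] a2 [c2 d2]].
- split; first by move=> y; exact: smooth_cont.
  move=> i; split; first by move=> y; exact: smooth_derivable.
  by exists ('D_(e i) g); first exact/pullback_alg_smooth/smooth_partial.
- have dA y : V y -> differentiable A (F y).
    by move=> Vy; exact: smooth_differentiableR oU sA (FVU Vy).
  have dF y : V y -> differentiable F y by exact: smooth_differentiable oV sF.
  split.
    move=> y Vy; apply: continuous_comp; first exact: smooth_cont sF Vy.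
    exact: smooth_cont sA (FVU Vy).
  move=> i; split.
    by move=> y Vy; exact: (derive_comp_row (e i) (dA _ Vy) (dF _ Vy)).1.
  exists (\sum_j (fun y => 'D_(e i) (fun z => F z 0 j) y) * ('D_(e j) A \o F)).
    apply: pullback_alg_sum => j; apply: pullback_alg_mul.
      exact/pullback_alg_smooth/smooth_partial/smooth_coord.
    exact/pullback_alg_comp/smooth_partial.
  move=> y Vy; rewrite (derive_comp_row (e i) (dA _ Vy) (dF _ Vy)).2 fct_sumE.
  apply: eq_bigr => j _; rewrite derive_mx ?mxE //.
  exact (smooth_derivable i sF Vy).
- split; first by move=> y Vy; apply: continuousD; [exact: c1 | exact: c2].
  move=> i; have [d1' [g1' p1 e1]] := d1 i; have [d2' [g2' p2 e2]] := d2 i.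
  split; first by move=> y Vy; apply: derivableD; [exact: d1' | exact: d2'].
  exists (g1' + g2'); first exact: pullback_alg_add.
  by move=> y Vy; rewrite deriveD ?e1 ?e2 //; [exact: d1' | exact: d2'].
- split; first by move=> y Vy; apply: continuousM; [exact: c1 | exact: c2].
  move=> i; have [d1' [g1' p1 e1]] := d1 i; have [d2' [g2' p2 e2]] := d2 i.
  split; first by move=> y Vy; apply: derivableM; [exact: d1' | exact: d2'].
  exists (g1 * g2' + g2 * g1'); first by apply: pullback_alg_add; exact: pullback_alg_mul.
  by move=> y Vy; rewrite deriveM ?e1 ?e2 //; [exact: d1' | exact: d2'].
Qed.

Lemma smooth_compR (A : 'rV[R]_n -> R) : smooth U A -> smooth V (A \o F).
Proof.
move=> sA; apply: (smooth_gen oV _ (pullback_alg_comp sA) (fun _ _ => erefl)).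
by move=> g /pullback_alg_stable.
Qed.

Lemma smooth_comp p (G : 'rV[R]_n -> 'rV[R]_p) : smooth U G -> smooth V (G \o F).
Proof.
by move=> sG; apply: smooth_row oV _ => l; exact: smooth_compR (smooth_coord l oU sG).
Qed.

End Composition.

Section Diffeologies.
Variable R : realType.

Lemma smooth_local n (W : normedModType R) (U : set 'rV[R]_n) (f : 'rV[R]_n -> W) :
  open U -> (forall x, U x -> exists V, [/\ open V, V x, V `<=` U & smooth V f]) ->
  smooth U f.
Proof.
move=> oU lf.
pose S (g : 'rV[R]_n -> W) :=
  forall x, U x -> exists V, [/\ open V, V x, V `<=` U & smooth V g].
apply: (smooth_gen (S := S) oU _ lf (fun _ _ => erefl)) => g Sg; split.
  by move=> x /Sg [V [_ Vx _ sg]]; exact: smooth_cont sg Vx.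
move=> i; split.
  by move=> x /Sg [V [_ Vx _ sg]]; exact (smooth_derivable i sg Vx).
exists ('D_(basis_vec R i) g) => // x /Sg [V [oV Vx VU sg]].
by exists V; split => //; exact: smooth_partial.
Qed.

Lemma open_preimage n k (V : set 'rV[R]_k) (W : set 'rV[R]_n) (F : 'rV[R]_k -> 'rV[R]_n) :
  open V -> smooth V F -> open W -> open (V `&` F @^-1` W).
Proof.
move=> oV sF oW; rewrite openE => x [Vx Wx].
apply: filterI; first exact: open_nbhs_of.
exact: (smooth_cont sF Vx) (open_nbhs_of oW Wx).
Qed.

Lemma euclid_diffeology k : is_diffeology (euclid R k).
Proof.
split; first by move=> n U p [].
split.
  move=> n U p q [oU /smooth_onE sp] pq; split => //.
  exact/smooth_onE/(smooth_ext oU pq).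
split; first by move=> n U c oU; split => //; exact/smooth_onE/smooth_cst.
split.
  move=> n U p oU lp; split => //; apply/smooth_onE/smooth_local => // x /lp.
  by move=> [V [oV Vx VU [_ /smooth_onE sp]]]; exists V.
move=> n m U p V F [oU /smooth_onE sp] oV /smooth_onE sF FVU; split => //.
exact/smooth_onE/(smooth_comp oU oV sF FVU sp).
Qed.

Lemma subspace_diffeology (X : dspace R) (A : set X) :
  is_diffeology X -> is_diffeology (Defs.subspace A).
Proof.
move=> [Xo [Xe [Xc [Xl Xr]]]]; split; first by move=> n U p /Xo.
split; first by move=> n U p q pp pq; apply: (Xe _ _ _ (sval \o q) pp) => x /pq /= ->.
split; first by move=> n U c; exact: Xc.
split; first by move=> n U p oU lp; exact: Xl.
by move=> n m U p V F pp; exact: (Xr _ _ _ (sval \o p) _ F pp).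
Qed.

Lemma coprod_diffeology (J : Type) (T : J -> dspace R) :
  (forall j, is_diffeology (T j)) -> is_diffeology (coprod T).
Proof.
move=> dT; split; first by move=> n U p [].
split.
  move=> n U p q [oU lp] pq; split => // x Ux.
  have [V [j [r [oV Vx VU pr rp]]]] := lp _ Ux.
  by exists V, j, r; split => // y Vy; rewrite -pq ?rp //; exact: VU.
split.
  move=> n U [j a] oU; split => // x Ux.
  by exists U, j, (fun _ => a); split => //; have [_ [_ [Tc _]]] := dT j; exact: Tc.
split.
  move=> n U p oU lp; split => // x Ux.
  have [W [oW Wx WU [_ /(_ x Wx) [V [j [r [oV Vx VW pr rp]]]]]]] := lp _ Ux.
  by exists V, j, r; split => // y /VW; exact: WU.
move=> n m U p V F [oU lp] oV /smooth_onE sF FVU; split => // y Vy.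
have [W [j [r [oW Wx WU pr rp]]]] := lp _ (FVU _ Vy).
have [_ [_ [_ [_ Tr]]]] := dT j.
have oVW := open_preimage oV sF oW.
exists (V `&` F @^-1` W), j, (r \o F).
split; [exact: oVW | by [] | by move=> z [] | | by move=> z [_ Wz] /=; rewrite rp].
apply: Tr pr oVW _ _; last by move=> z [].
by apply/smooth_onE; apply: smooth_sub sF => z [].
Qed.

Lemma choice_on (T A B : Type) (i : A -> B) (p : T -> B) (U : set T) :
  A -> (forall y, U y -> exists a, i a = p y) ->
  exists q : T -> A, forall y, U y -> i (q y) = p y.
Proof.
move=> a0 ip.
exists (fun y => if pselect (exists a, i a = p y) is left H then projT1 (cid H) else a0).
by move=> y Uy; case: pselect => [H|]; [exact: projT2 (cid H) | move/(_ (ip _ Uy))].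
Qed.

Definition lifts_plots (B P : dspace R) (i : B -> P) : Prop :=
  forall n (U : set 'rV[R]_n) p, dplot U p -> (forall y, U y -> exists b, i b = p y) ->
    (exists y, U y) -> exists2 q, dplot U q & forall y, U y -> i (q y) = p y.

Definition coprod_incl (J : Type) (T : J -> dspace R) (A : forall j, set (T j)) :
    coprod (fun j => Defs.subspace (A j)) -> coprod T :=
  fun z => existT _ (projT1 z) (sval (projT2 z)).
Arguments coprod_incl {J T} A.

Section CoprodIncl.
Local Unset Implicit Arguments.
Variables (J : Type) (T : J -> dspace R) (A : forall j, set (T j)).

Lemma coprod_incl_inv z j x : coprod_incl A z = existT _ j x ->
  exists Ax : A j x, z = existT _ j (exist _ x Ax).
Proof.
case: z => [j' [x' Ax']] E; have ej : j' = j by exact: (f_equal (@projT1 _ _) E).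
subst j'; rewrite /coprod_incl /= in E.
by move: Ax'; rewrite (@inj_pairT2 _ _ _ _ _ E) => Ax'; exists Ax'.
Qed.

Lemma coprod_incl_inj : injective (coprod_incl A).
Proof.
move=> z1 [j [x Ax]] /coprod_incl_inv [Ax' ->].
by rewrite (Prop_irrelevance Ax' Ax).
Qed.

Lemma coprod_incl_lifts : (forall j, is_diffeology (T j)) -> lifts_plots (coprod_incl A).
Proof.
move=> dT n U p [oU lp] im [y0 Uy0].
have [s0 _] := im _ Uy0.
have [s sE] := choice_on s0 im.
exists s => //; split => // x Ux.
have [W [j [r [oW Wx WU pr rp]]]] := lp _ Ux.
have Ar y : W y -> A j (r y).
  move=> Wy; have /coprod_incl_inv [Ary _] : coprod_incl A (s y) = existT _ j (r y).
    by rewrite sE ?rp //; exact: WU.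
  exact: Ary.
have [q qE] := choice_on (i := @sval _ (A j)) (p := r) (exist (A j) _ (Ar x Wx))
  (fun y Wy => ex_intro _ (exist _ _ (Ar y Wy)) erefl).
exists W, j, q; split => //.
  by have [_ [Te _]] := dT j; apply: Te pr _ => y Wy; rewrite /= qE.
by move=> y Wy; apply: coprod_incl_inj; rewrite sE ?rp /coprod_incl /= ?qE //; exact: WU.
Qed.

End CoprodIncl.

End Diffeologies.

Section Pushouts.
Variable R : realType.

Definition indiscrete (T : Type) : dspace R := @DSpace R T (fun n U p => open U).

Lemma indiscrete_diffeology T : is_diffeology (indiscrete T).
Proof. by do 4 (split; first by []); move=> n k U p V F _ oV. Qed.

Section PushoutFibers.
Variables (A B C P : dspace R) (f : A -> B) (g : A -> C) (jB : B -> P) (jC : C -> P).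
Hypotheses (po : is_pushout f g jB jC) (dB : is_diffeology B) (dC : is_diffeology C).
Hypothesis ginj : injective g.

(* Mapping [b] to [{b}] and [c] to the [f]-image of its [g]-fibre is smooth into the
   indiscrete space of subsets of [B], so it factors through the pushout. *)
Lemma pushout_fibre_map : exists u : P -> set B,
  u \o jB = (fun b => [set b]) /\ u \o jC = (fun c => [set b | exists2 a, g a = c & f a = b]).
Proof.
have [_ _ _ univ] := po; have [oB _] := dB; have [oC _] := dC.
have [|||u [[_ uE] _]] := univ (indiscrete (set B)) (indiscrete_diffeology _)
    (fun b => [set b]) (fun c => [set b | exists2 a, g a = c & f a = b]).
- by move=> n U p /oB.
- by move=> n U p /oC.
- apply: funext => a; apply/seteqP; split => b /=; first by move=> ->; exists a.
  by move=> [a' /ginj -> <-].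
by exists u.
Qed.

Lemma pushout_injective : injective jB.
Proof.
have [u [uB _]] := pushout_fibre_map.
have ub b : u (jB b) = [set b] := congr1 (@^~ b) uB.
move=> b b' E; have : u (jB b') b' by rewrite ub.
by rewrite -E ub => ->.
Qed.

Lemma pushout_fibre c b : jC c = jB b -> exists2 a, g a = c & f a = b.
Proof.
have [u [uB uC]] := pushout_fibre_map => E.
have ub : u (jB b) = [set b] := congr1 (@^~ b) uB.
have uc : u (jC c) = [set b | exists2 a, g a = c & f a = b] := congr1 (@^~ c) uC.
have : u (jC c) b by rewrite E ub.
by rewrite uc.
Qed.

End PushoutFibers.

Section LiftingSpace.
Variables (B P : dspace R) (i : B -> P).
Hypotheses (dB : is_diffeology B) (dP : is_diffeology P) (iinj : injective i).

Definition lifts_reparams n (U : set 'rV[R]_n) (p : 'rV[R]_n -> P) : Prop :=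
  forall k (V : set 'rV[R]_k) F, open V -> smooth_on V F -> (forall y, V y -> U (F y)) ->
    (forall y, V y -> exists b, i b = p (F y)) -> (exists y, V y) ->
    exists2 q, dplot V q & forall y, V y -> i (q y) = p (F y).

Definition lifting_space : dspace R :=
  @DSpace R P (fun n U p => dplot U p /\ lifts_reparams U p).

Lemma glue_lifts k (V : set 'rV[R]_k) (p : 'rV[R]_k -> P) :
  open V -> (forall y, V y -> exists b, i b = p y) ->
  (forall y, V y -> exists W, [/\ open W, W y, W `<=` V &
     exists2 q, dplot W q & forall z, W z -> i (q z) = p z]) ->
  (exists y, V y) -> exists2 q, dplot V q & forall y, V y -> i (q y) = p y.
Proof.
have [_ [Be [_ [Bl _]]]] := dB.
move=> oV im loc [y0 /im [b0 _]]; have [q qE] := choice_on b0 im.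
exists q => //; apply: Bl => // y /loc [W [oW Wy WV [r pr rE]]].
exists W; split => //; apply: Be pr _ => z Wz; apply: iinj.
by rewrite rE // qE //; exact: WV.
Qed.

Lemma lifting_space_diffeology : is_diffeology lifting_space.
Proof.
have [Po [Pe [Pc [Pl Pr]]]] := dP; have [_ [_ [Bc _]]] := dB.
split; first by move=> n U p [/Po].
split.
  move=> n U p p' [pp lp] pp'; split; first exact: Pe pp pp'.
  move=> k V F oV sF FU im ne.
  have [|q pq qE] := lp _ _ _ oV sF FU _ ne.
    by move=> y Vy; rewrite pp'; [exact: im | exact: FU].
  by exists q => // y Vy; rewrite qE // pp' //; exact: FU.
split.
  move=> n U c oU; split; first exact: Pc.
  move=> k V F oV _ _ im [y0 /im [b0 b0E]].
  by exists (fun=> b0); first exact: Bc.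
split.
  move=> n U p oU loc; split.
    by apply: Pl => // x /loc [W [oW Wx WU [pW _]]]; exists W.
  move=> k V F oV sF FU im ne; apply: glue_lifts => // y Vy.
  have [W [oW WFy WU [_ lW]]] := loc _ (FU _ Vy).
  have /smooth_onE sF' := sF.
  have oVW := open_preimage oV sF' oW.
  have sFW : smooth_on (V `&` F @^-1` W) F.
    by apply/smooth_onE; apply: smooth_sub sF' => z [].
  have [|q pq qE] := lW _ _ F oVW sFW (fun z => @proj2 _ _) _ (ex_intro _ y (conj Vy WFy)).
    by move=> z [Vz _]; exact: im.
  by exists (V `&` F @^-1` W); split; [| split | move=> z [] | exists q].
move=> n k U p V G [pp lp] oV sG GU; split; first exact: Pr pp oV sG GU.
move=> k' T F oT sF FV im ne.
have /smooth_onE sG' := sG; have /smooth_onE sF' := sF.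
have sGF : smooth_on T (G \o F) by apply/smooth_onE; exact (smooth_comp oV oT sF' FV sG').
exact: lp _ T (G \o F) oT sGF (fun y Ty => GU _ (FV _ Ty)) im ne.
Qed.

Lemma lifting_space_smooth : dsmooth i -> @dsmooth R B lifting_space i.
Proof.
have [_ [_ [_ [_ Br]]]] := dB.
move=> si n U p pp; split; first exact: si.
by move=> k V F oV sF FU _ _; exists (p \o F) => //; exact: Br pp oV sF FU.
Qed.

Lemma lifts_plots_of_lifting_space :
  (forall n (U : set 'rV[R]_n) (p : 'rV[R]_n -> P),
     dplot U p -> @dplot R lifting_space n U p) ->
  lifts_plots i.
Proof.
move=> PQ n U p pp im ne; have [_ lp] := PQ _ _ _ pp; have [Po _] := dP.
exact: lp _ U id (Po _ _ _ pp) ((smooth_onE _ _).2 (smooth_id U)) (fun y Uy => Uy) im ne.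
Qed.

End LiftingSpace.

Lemma pushout_lifts_plots (A B C P : dspace R) (f : A -> B) (g : A -> C)
    (jB : B -> P) (jC : C -> P) :
  is_pushout f g jB jC -> is_diffeology B -> is_diffeology C -> is_diffeology P ->
  dsmooth f -> injective g -> lifts_plots g -> lifts_plots jB.
Proof.
move=> po dB dC dP sf ginj gl; have [sjB sjC comm univ] := po.
have jBinj := pushout_injective po dB dC ginj.
have [_ [_ [_ [_ Cr]]]] := dC.
have sjCQ : @dsmooth R C (lifting_space jB) jC.
  move=> n U d pd; split; first exact: sjC.
  move=> k V F oV sF FU im ne.
  have [|s ps sE] := gl _ _ _ (Cr _ _ _ _ _ _ pd oV sF FU) _ ne.
    move=> y /im [b /esym /(pushout_fibre po dB dC ginj) [a ga _]]; by exists a.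
  exists (f \o s); first exact: sf.
  by move=> y Vy; rewrite /= -[jB (f _)]/((jB \o f) _) comm /= sE.
have [u [[su [uB uC]] _]] :=
  univ _ (lifting_space_diffeology dB dP jBinj) _ _ (lifting_space_smooth dB sjB) sjCQ comm.
have [u' [_ u'_uniq]] := univ _ dP _ _ sjB sjC comm.
have suP : @dsmooth R P P u by move=> n U p /su [].
have uid : u = id by rewrite (u'_uniq _ suP uB uC); apply/esym/u'_uniq.
apply: (lifts_plots_of_lifting_space dP) => n U p pp.
by have := su _ _ _ pp; rewrite uid.
Qed.

Lemma induction_of_lifts (B P : dspace R) (i : B -> P) :
  is_diffeology B -> is_diffeology P -> injective i -> dsmooth i -> lifts_plots i ->
  induction_map i.
Proof.
move=> [_ [Be [Bc _]]] [Po _] iinj si il; split => //; split.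
  by move=> n U p pp; exact: si.
pose r (z : Defs.subspace (dimage i)) : B := projT1 (cid (proj2_sig z)).
have rE z : i (r z) = sval z by exact: projT2 (cid (proj2_sig z)).
exists r; split.
- move=> n U p pp; have [[y0 Uy0]|ne] := pselect (exists y, U y).
    have [|q pq qE] := il _ _ _ pp _ (ex_intro _ y0 Uy0).
      by move=> y _; exact: proj2_sig (p y).
    by apply: Be pq _ => y Uy; apply: iinj; rewrite qE // rE.
  apply: Be (Bc _ _ (r (p 0)) (Po _ _ _ pp)) _ => y Uy.
  by case: ne; exists y.
- by move=> b; apply: iinj; rewrite rE.
- by case=> y Hy; apply: eq_exist; exact: rE.
Qed.

End Pushouts.

Lemma fat_disks_diffeology {R : realType} {n} {J : Type} {mj : J -> nat} :
  is_diffeology (coprod (fun j : J => fatD R n (mj j))).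
Proof.
by apply: coprod_diffeology => j; apply: subspace_diffeology; exact: euclid_diffeology.
Qed.

Lemma cell_incl_inj {R : realType} {n} {J : Type} {mj : J -> nat} :
  injective (cell_incl R n J mj).
Proof. exact: coprod_incl_inj. Qed.

Lemma cell_incl_lifts {R : realType} {n} {J : Type} {mj : J -> nat} :
  lifts_plots (cell_incl R n J mj).
Proof.
by apply: coprod_incl_lifts => j; apply: subspace_diffeology; exact: euclid_diffeology.
Qed.

Theorem proposition5p2 (R : realType)
    (X : dspace R) (Xs : nat -> dspace R)
    (J : nat -> Type) (mm : forall n, J n -> nat)
    (h : forall n, coprod (fun j : J n => fatS R n (mm n j)) -> Xs n)
    (ih : forall n, Xs n -> Xs n.+1)
    (hh : forall n, coprod (fun j : J n => fatD R n (mm n j)) -> Xs n.+1)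
    (c : forall n, Xs n -> X) :
  is_diffeology X -> (forall k, is_diffeology (Xs k)) ->
  (forall n, dsmooth (h n)) ->
  (forall n, is_pushout (h n) (@cell_incl R n (J n) (mm n)) (ih n) (hh n)) ->
  is_seq_colimit ih c ->
  forall n : nat, induction_map (ih n).
Proof.
move=> _ dXs sh po _ n.
apply: induction_of_lifts (dXs n) (dXs n.+1) _ _ _.
- exact: pushout_injective (po n) (dXs n) fat_disks_diffeology cell_incl_inj.
- by have [] := po n.
exact: pushout_lifts_plots (po n) (dXs n) fat_disks_diffeology (dXs n.+1) (sh n)
  cell_incl_inj cell_incl_lifts.
Qed.
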